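(* Let $F$ and $G$ be experiments on the state space $\Theta=\{\theta_0,\ldots,\theta_n\}$ with densities $f(\cdot\mid\theta)$ on $\mathcal{X}$ and $g(\cdot\mid\theta)$ on $\mathcal{Y}$, and assume $f(x\mid\theta_0)>0$ for all $x\in\mathcal{X}$ and $g(y\mid\theta_0)>0$ for all $y\in\mathcal{Y}$. Then $F\succeq_{\textup{LB}}G$ if and only if $\boldsymbol{\ell}_F\succeq_{\textup{lcx}}\boldsymbol{\ell}_G$.
   Context: States: $\Theta=\{\theta_0,\ldots,\theta_n\}\subset\mathbb{R}$. An experiment $F$ specifies, for each $\theta$, an absolutely continuous distribution $F(\cdot\mid\theta)$ with density $f(\cdot\mid\theta)$ of a signal $X$ in a compact interval $\mathcal{X}$; likewise $G$ with densities $g(\cdot\mid\theta)$ of a signal $Y$ in a compact interval $\mathcal{Y}$. Let $\widehat{\Delta}_n=\{\boldsymbol{q}\in[0,1]^n:\sum_{i=1}^n q_i\le1\}$; a prior $\boldsymbol{q}$ puts probability $q_i$ on $\theta_i$, $i\ge1$, and $q_0=1-\sum_i q_i$ on $\theta_0$. The posterior vector is $\boldsymbol{p}_F(x;\boldsymbol{q})=(p_{F,i}(x;\boldsymbol{q}))_{i=1}^n$ with $p_{F,i}(x;\boldsymbol{q})=q_if(x\mid\theta_i)/\sum_{j=0}^nq_jf(x\mid\theta_j)$, and $\boldsymbol{p}_F(\boldsymbol{q})$ is the random vector $\boldsymbol{p}_F(X;\boldsymbol{q})$ with $X$ distributed according to the unconditional distribution $\sum_j q_jF(\cdot\mid\theta_j)$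 (analogously for $G$). For random vectors with equal means, $\boldsymbol{\mu}\succeq_{\textup{cx}}\boldsymbol{\nu}$ means $\mathbb{E}[C(\boldsymbol{\mu})]\ge\mathbb{E}[C(\boldsymbol{\nu})]$ for all convex $C$, and $\boldsymbol{\mu}\succeq_{\textup{lcx}}\boldsymbol{\nu}$ means $\boldsymbol{b}\cdot\boldsymbol{\mu}\succeq_{\textup{cx}}\boldsymbol{b}\cdot\boldsymbol{\nu}$ for all $\boldsymbol{b}\in\mathbb{R}^n$. $F\succeq_{\textup{LB}}G$ means $\boldsymbol{p}_F(\boldsymbol{q})\succeq_{\textup{lcx}}\boldsymbol{p}_G(\boldsymbol{q})$ for all $\boldsymbol{q}\in\widehat{\Delta}_n$. Likelihood ratios: $l_{F,i}(x)=f(x\mid\theta_i)/f(x\mid\theta_0)$, $\boldsymbol{\ell}_F(x)=(l_{F,1}(x),\ldots,l_{F,n}(x))$, and $\boldsymbol{\ell}_F$ denotes the random vector $\boldsymbol{\ell}_F(X)$ with $X\sim F(\cdot\mid\theta_0)$; analogously $\boldsymbol{\ell}_G=\boldsymbol{\ell}_G(Y)$ with $Y\sim G(\cdot\mid\theta_0)$, $l_{G,i}=g(\cdot\mid\theta_i)/g(\cdot\mid\theta_0)$. *)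

From HB Require Import structures.
From mathcomp Require Import all_boot all_order all_algebra.
From mathcomp Require Import all_classical all_reals all_analysis.
Set Implicit Arguments. Unset Strict Implicit. Unset Printing Implicit Defensive.
Import Order.TTheory GRing.Theory Num.Theory.
Local Open Scope classical_set_scope.
Local Open Scope ring_scope.

Section Defs.
Variable R : realType.

Definition convex_fun (phi : R -> R) : Prop :=
  forall x y t : R, 0 <= t -> t <= 1 ->
    phi (t * x + (1 - t) * y) <= t * phi x + (1 - t) * phi y.

(* An experiment with states theta_0..theta_n (indexed by 'I_n.+1), signal
   in the compact interval [a,b], densities f i (w.r.t. Lebesgue measure). *)
Definition is_experiment (n : nat) (a b : R) (f : 'I_n.+1 -> R -> R) : Prop :=
  forall i : 'I_n.+1,
    measurable_fun `[a, b] (f i) /\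
    (forall x, x \in `[a, b] -> 0 <= f i x) /\
    (\int[@lebesgue_measure R]_(x in `[a, b]) (f i x)%:E = 1)%E.

Definition Edens (a b : R) (w : R -> R) (Z : R -> R) : \bar R :=
  \int[@lebesgue_measure R]_(x in `[a, b]) (Z x * w x)%:E.

(* Convex order for real random variables Z(X) (X ~ w on [a,b]) and
   W(Y) (Y ~ v on [c,d]):  Z(X) >=_cx W(Y). *)
Definition cx_ge (a b : R) (w Z : R -> R) (c d : R) (v W : R -> R) : Prop :=
  forall phi : R -> R, convex_fun phi ->
    (Edens c d v (phi \o W) <= Edens a b w (phi \o Z))%E.

Definition lcx_ge (n : nat) (a b : R) (w : R -> R) (Z : R -> 'I_n -> R)
    (c d : R) (v : R -> R) (W : R -> 'I_n -> R) : Prop :=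
  forall bv : 'I_n -> R,
    cx_ge a b w (fun x => \sum_(i < n) bv i * Z x i)
          c d v (fun y => \sum_(i < n) bv i * W y i).

(* Priors: q in the "hat simplex"; q i is the mass on theta_{i+1}. *)
Definition hat_simplex (n : nat) (q : 'I_n -> R) : Prop :=
  (forall i, 0 <= q i <= 1) /\ \sum_(i < n) q i <= 1.

Definition full_prior (n : nat) (q : 'I_n -> R) (j : 'I_n.+1) : R :=
  match unlift ord0 j with
  | None => 1 - \sum_(i < n) q i
  | Some i => q i
  end.

Definition uncond (n : nat) (f : 'I_n.+1 -> R -> R) (q : 'I_n -> R) (x : R) : R :=
  \sum_(j < n.+1) full_prior q j * f j x.

Definition posterior (n : nat) (f : 'I_n.+1 -> R -> R) (q : 'I_n -> R)
    (x : R) (i : 'I_n) : R :=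
  q i * f (lift ord0 i) x / uncond f q x.

Definition LB_ge (n : nat) (a b : R) (f : 'I_n.+1 -> R -> R)
    (c d : R) (g : 'I_n.+1 -> R -> R) : Prop :=
  forall q : 'I_n -> R, hat_simplex q ->
    lcx_ge a b (uncond f q) (posterior f q) c d (uncond g q) (posterior g q).

Definition lratio (n : nat) (f : 'I_n.+1 -> R -> R) (x : R) (i : 'I_n) : R :=
  f (lift ord0 i) x / f ord0 x.

End Defs.

(* Both orders are equivalent to the inequalities
     int (sum_j al_j g_j)^+  <=  int (sum_j al_j f_j)^+     for all al in R^(n+1).
   Weighting by the density of the signal turns the expectation of a ramp
   (s r + e)^+ of b . l_F into int (sum_j al_j f_j)^+ with al = (e, s b), and
   that of a ramp of b . p_F(q) into the same integral with al_j = q_j (s b_j + e)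
   (b_0 := 0); affine test functions have equal expectations on both sides since
   every density integrates to 1.  Both coefficient maps are onto R^(n+1) (for
   the posterior, already under the uniform prior), so either order implies the
   inequalities.  Conversely, ramps and affine maps suffice for the convex order:
   a convex phi is the pointwise limit of the maxima of its tangents at the points
   of finer and finer grids, each an affine map plus a nonnegative combination of
   ramps, and Fatou's lemma passes the inequality to the limit. *)

From HB Require Import structures.
From mathcomp Require Import all_boot all_order all_algebra.
From mathcomp Require Import all_classical all_reals all_analysis.
From mathcomp Require Import measurable_realfun ring lra.
Set Implicit Arguments. Unset Strict Implicit.
Import Order.TTheory GRing.Theory Num.Theory.
Import numFieldNormedType.Exports.
Local Open Scope classical_set_scope.
Local Open Scope ring_scope.

Section ConvexMinorants.
Variables (R : realType) (phi : R -> R).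
Hypothesis phi_convex : convex_fun phi.

Lemma convex_fun_chord (x y z : R) : x < y -> y < z ->
  (z - x) * phi y <= (z - y) * phi x + (y - x) * phi z.
Proof.
move=> xy yz; have zx : 0 < z - x by lra.
set t := (z - y) / (z - x).
have t0 : 0 <= t by apply: divr_ge0; lra.
have t1 : t <= 1 by rewrite ler_pdivrMr //; lra.
have yE : t * x + (1 - t) * z = y by rewrite /t; field; lra.
have := ler_wpM2l (ltW zx) (phi_convex x z t0 t1); rewrite yE.
suff -> : (z - x) * (t * phi x + (1 - t) * phi z) =
  (z - y) * phi x + (y - x) * phi z by [].
by rewrite /t; field; lra.
Qed.

Definition slope (x y : R) := (phi y - phi x) / (y - x).

Lemma slope_le (x y z : R) : x < y -> y < z -> slope x y <= slope y z.
Proof.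
move=> xy yz; have := convex_fun_chord xy yz.
rewrite /slope ler_pdivrMr ?subr_gt0 // mulrAC ler_pdivlMr ?subr_gt0 //.
nra.
Qed.

Definition right_deriv (x : R) :=
  inf [set slope x (x + h) | h in [set h | 0 < h]].

Lemma right_deriv_le_slope (x y : R) : x < y -> right_deriv x <= slope x y.
Proof.
move=> xy; apply: ge_inf.
  by exists (slope (x - 1) x) => _ [h /= h0 <-]; apply: slope_le; lra.
by exists (y - x); [rewrite /=; lra | congr slope; ring].
Qed.

Lemma slope_le_right_deriv (x y : R) : x < y -> slope x y <= right_deriv y.
Proof.
move=> xy; apply: lb_le_inf; first by exists (slope y (y + 1)), 1 => /=.
by move=> _ [h /= h0 <-]; apply: slope_le; lra.
Qed.

Lemma right_deriv_nondecreasing : {homo right_deriv : x y / x <= y}.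
Proof.
move=> x y; rewrite le_eqVlt => /predU1P[-> //|xy].
exact: le_trans (right_deriv_le_slope xy) (slope_le_right_deriv xy).
Qed.

Definition tangent (x r : R) := phi x + right_deriv x * (r - x).

Lemma tangent_le (x r : R) : tangent x r <= phi r.
Proof.
rewrite /tangent; have [xr|rx|<-] := ltgtP x r; last by lra.
- have := right_deriv_le_slope xr; rewrite /slope ler_pdivlMr ?subr_gt0 //; nra.
- have := slope_le_right_deriv rx; rewrite /slope ler_pdivrMr ?subr_gt0 //; nra.
Qed.

Lemma tangent_le_tangent_right (x y r : R) :
  x <= y -> y <= r -> tangent x r <= tangent y r.
Proof.
move=> xy yr; have := tangent_le x y; have := right_deriv_nondecreasing xy.
rewrite /tangent; nra.
Qed.

Lemma tangent_le_tangent_left (x y r : R) :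
  x <= y -> r <= x -> tangent y r <= tangent x r.
Proof.
move=> xy rx; have := tangent_le y x; have := right_deriv_nondecreasing xy.
rewrite /tangent; nra.
Qed.

Lemma tangent_ge (x r : R) : x <= r -> r - 1 <= x ->
  phi r - (right_deriv r - right_deriv (r - 1)) * (r - x) <= tangent x r.
Proof.
move=> xr rx; have := tangent_le r x.
have := right_deriv_nondecreasing rx; rewrite /tangent; nra.
Qed.

Section TangentEnvelope.
Variable xs : nat -> R.
Hypothesis xs_nondecreasing : forall j, xs j <= xs j.+1.

(* Equal to max_(j <= m) tangent (xs j) r; the telescoped form shows it is an
   affine function plus a nonnegative combination of ramps r |-> (g r + e)^+. *)
Definition tangent_envelope (m : nat) (r : R) :=
  tangent (xs 0) r +
  \sum_(j < m) Num.max (tangent (xs j.+1) r - tangent (xs j) r) 0.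

Lemma tangent_envelopeS m r : tangent_envelope m.+1 r =
  tangent_envelope m r + Num.max (tangent (xs m.+1) r - tangent (xs m) r) 0.
Proof. by rewrite /tangent_envelope big_ord_recr /= addrA. Qed.

Let tangent_envelope_le_eq m r : tangent_envelope m r <= phi r /\
  (xs m <= r -> tangent_envelope m r = tangent (xs m) r).
Proof.
elim: m => [|m [IHle IHeq]].
  by rewrite /tangent_envelope big_ord0 addr0; split => //; exact: tangent_le.
rewrite tangent_envelopeS; split; last first.
  move=> xr; have xmr := le_trans (xs_nondecreasing m) xr.
  rewrite IHeq // max_l ?subr_ge0; first by ring.
  exact: tangent_le_tangent_right.
have [xmr|rxm] := leP (xs m) r; last first.
  rewrite max_r ?addr0 // subr_le0.
  exact: tangent_le_tangent_left (ltW rxm).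
rewrite IHeq //; have := tangent_le (xs m.+1) r; have := tangent_le (xs m) r.
by case: (leP (tangent (xs m.+1) r - tangent (xs m) r) 0); lra.
Qed.

Lemma tangent_envelope_le m r : tangent_envelope m r <= phi r.
Proof. exact: (tangent_envelope_le_eq m r).1. Qed.

Lemma tangent_le_envelope m j r : (j <= m)%N ->
  tangent (xs j) r <= tangent_envelope m r.
Proof.
elim: m j => [|m IH] j.
  by rewrite leqn0 => /eqP ->; rewrite /tangent_envelope big_ord0 addr0.
rewrite tangent_envelopeS leq_eqVlt ltnS.
set d := tangent (xs m.+1) r - tangent (xs m) r.
have d_le : d <= Num.max d 0 by rewrite le_max lexx.
have max_ge0 : 0 <= Num.max d 0 by rewrite le_max lexx orbT.
case/predU1P => [->|jm]; first by have := IH m (leqnn m); rewrite /d in d_le *; lra.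
by have := IH j jm; lra.
Qed.

End TangentEnvelope.
End ConvexMinorants.

Lemma bracket_by_steps (R : realFieldType) (xs : nat -> R) (h r : R) (m : nat) :
  0 <= h -> (forall j, xs j.+1 - xs j <= h) -> xs 0 <= r -> r <= xs m ->
  exists j, [/\ (j <= m)%N, xs j <= r & r - xs j <= h].
Proof.
move=> h0 steps r0; elim: m => [|m IH] rm; first by exists 0%N; split => //; lra.
have [rxm|xmr] := leP r (xs m).
  by have [j [jm ? ?]] := IH rxm; exists j; split => //; exact: leqW.
by exists m; split => //; [exact: ltW | have := steps m; lra].
Qed.

Section ConvexApproximation.
Variables (R : realType) (phi : R -> R).
Hypothesis phi_convex : convex_fun phi.

(* For 0 <= j <= 2 N (N + 1), grid N j runs through [-N, N] with mesh 1 / (N + 1). *)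
Definition grid (N j : nat) : R := j%:R / N.+1%:R - N%:R.

Definition convex_approx (N : nat) : R -> R :=
  tangent_envelope phi (grid N) (2 * N * N.+1).

Lemma grid_step N j : grid N j.+1 - grid N j = N.+1%:R^-1.
Proof. by rewrite /grid -addn1 natrD; field; rewrite addrC natr1 pnatr_eq0. Qed.

Lemma grid_nondecreasing N j : grid N j <= grid N j.+1.
Proof. by rewrite -subr_ge0 grid_step invr_ge0 ler0n. Qed.

Lemma convex_approx_le N r : convex_approx N r <= phi r.
Proof. exact: (tangent_envelope_le phi_convex (@grid_nondecreasing N)). Qed.

Lemma tangent0_le_convex_approx N r : tangent phi 0 r <= convex_approx N r.
Proof.
have -> : 0 = grid N (N * N.+1).
  by rewrite /grid natrM; field; rewrite addrC natr1 pnatr_eq0.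
by apply: tangent_le_envelope; rewrite -mulnA leq_pmull.
Qed.

Lemma convex_approx_ge N r : `|r| <= N%:R ->
  phi r - (right_deriv phi r - right_deriv phi (r - 1)) * N.+1%:R^-1 <=
  convex_approx N r.
Proof.
move=> rN; set h : R := N.+1%:R^-1.
have h0 : 0 < h by rewrite invr_gt0 ltr0Sn.
have h1 : h <= 1 by rewrite invf_le1 ?ltr0Sn // ler1n.
have [j [jm xjr rxj]] : exists j, [/\ (j <= 2 * N * N.+1)%N,
    grid N j <= r & r - grid N j <= h].
  apply: bracket_by_steps; first exact: ltW.
  - by move=> j; rewrite grid_step.
  - by rewrite /grid mul0r; have := ler_norm (- r); rewrite normrN; lra.
  - have -> : grid N (2 * N * N.+1) = N%:R.
      by rewrite /grid !natrM; field; rewrite addrC natr1 pnatr_eq0.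
    by have := ler_norm r; lra.
have K0 : 0 <= right_deriv phi r - right_deriv phi (r - 1).
  by rewrite subr_ge0; apply: right_deriv_nondecreasing => //; lra.
have xj_ge : r - 1 <= grid N j by lra.
have := tangent_ge phi_convex xjr xj_ge.
have := tangent_le_envelope phi (grid N) r jm.
have := ler_wpM2l K0 rxj; rewrite /convex_approx; nra.
Qed.

Lemma convex_approx_cvg r : (convex_approx N r) @[N --> \oo] --> phi r.
Proof.
pose lo N := phi r - (right_deriv phi r - right_deriv phi (r - 1)) * harmonic N.
have lo_cvg : lo @ \oo --> phi r.
  rewrite -[X in _ --> X]subr0; apply: cvgB; first exact: cvg_cst.
  rewrite -(mulr0 (right_deriv phi r - right_deriv phi (r - 1))).
  by apply: cvgZ; [exact: cvg_cst | exact: cvg_harmonic].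
apply: (squeeze_cvgr _ lo_cvg (cvg_cst _)).
near=> N; rewrite convex_approx_le andbT; apply: convex_approx_ge.
near: N; exact: nbhs_infty_ger.
Unshelve. all: by end_near.
Qed.

Lemma convex_approx_gap_cvg (r y : R) :
  ((convex_approx N r - tangent phi 0 r) * y)%:E @[N --> \oo] -->
  ((phi r - tangent phi 0 r) * y)%:E.
Proof.
apply: cvg_EFin; first exact: nearW.
by apply: cvgMr_tmp; apply: cvgB; [exact: convex_approx_cvg | exact: cvg_cst].
Qed.

End ConvexApproximation.

Definition ramp (R : realDomainType) (g e r : R) : R := Num.max (g * r + e) 0.

Lemma ramp_convex (R : realType) (g e : R) : convex_fun (ramp g e).
Proof.
move=> x y t t0 t1; rewrite /ramp ge_max; apply/andP; split; last first.
  by apply: addr_ge0; apply: mulr_ge0; rewrite ?le_max ?lexx ?orbT //; lra.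
have -> : g * (t * x + (1 - t) * y) + e =
  t * (g * x + e) + (1 - t) * (g * y + e) by ring.
by apply: lerD; apply: ler_wpM2l; rewrite ?le_max ?lexx //; lra.
Qed.

Section ExtendedAbs.
Local Open Scope ereal_scope.
Variable R : realType.

Lemma lee_max_addr_abs (e : \bar R) (y : R) : e <= maxe (e + y%:E) 0 + `|y|%:E.
Proof.
case: e => [r| |] /=; [|by rewrite max_l ?leey | exact: leNye].
rewrite -EFin_max -EFinD lee_fin; have := ler_norm y; have := ler_norm (- y).
by rewrite normrN; case: (leP 0%R (r + y)%R); lra.
Qed.

Lemma max_oppe_addr_le_abs (e : \bar R) (y : R) : 0 <= e ->
  maxe (- (e + y%:E)) 0 <= `|y|%:E.
Proof.
case: e => [r| |] //= r0; last by rewrite max_r ?leNye // lee_fin normr_ge0.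
rewrite -EFin_max lee_fin; rewrite lee_fin in r0; have := ler_norm y.
by have := ler_norm (- y); rewrite normrN; case: (leP (- (r + y))%R 0%R); lra.
Qed.

End ExtendedAbs.

Section WeightedIntegrals.
Local Open Scope ereal_scope.
Context d (T : measurableType d) (R : realType).
Variables (mu : {measure set T -> \bar R}) (D : set T).
Hypothesis mD : measurable D.

Lemma integralD_ge0_integrable (f : T -> \bar R) (g : T -> R) :
  measurable_fun D f -> (forall x, D x -> 0 <= f x) ->
  mu.-integrable D (EFin \o g) ->
  \int[mu]_(x in D) (f x + (g x)%:E) =
  \int[mu]_(x in D) f x + \int[mu]_(x in D) (g x)%:E.
Proof.
move=> mf f_ge0 ig; have [fint|fnint] := pselect (mu.-integrable D f).
  by rewrite integralD.
have mg : measurable_fun D (EFin \o g) := measurable_int _ ig.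
have g_fin : \int[mu]_(x in D) `|(g x)%:E| < +oo by case/integrableP : ig.
have fE : \int[mu]_(x in D) f x = +oo.
  apply/eqP; rewrite eq_le leey /= leNgt; apply/negP => flt; apply: fnint.
  apply/integrableP; split => //; rewrite (eq_integral f) //.
  by move=> x /[!inE] Dx; rewrite gee0_abs ?f_ge0.
have [r rE] : exists r : R, \int[mu]_(x in D) (g x)%:E = r%:E.
  by exists (fine (\int[mu]_(x in D) (g x)%:E)); rewrite fineK ?integrable_fin_num.
(* With [h := f + g], [f <= h^+ + |g|] forces [\int h^+ = +oo], while [h^- <= |g|]. *)
set h := fun x => f x + (g x)%:E.
have mh : measurable_fun D h by exact: emeasurable_funD.
have hposE : \int[mu]_(x in D) h^\+ x = +oo.
  have : \int[mu]_(x in D) f x <= \int[mu]_(x in D) (h^\+ x + `|(g x)%:E|).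
    apply: ge0_le_integral => //; last by move=> x _; rewrite funeposE lee_max_addr_abs.
    by apply: emeasurable_funD; [exact: measurable_funepos | exact: measurableT_comp].
  rewrite fE ge0_integralD //; [|exact: measurable_funepos | exact: measurableT_comp].
  rewrite leye_eq => /eqP; apply: contra_eq => hfin.
  by rewrite lt_eqF // lte_add_pinfty // ltey.
have hneg_fin : \int[mu]_(x in D) h^\- x < +oo.
  apply: le_lt_trans g_fin; apply: ge0_le_integral => //; try by
    [move=> x _; exact: funeneg_ge0 | exact: measurable_funeneg | exact: measurableT_comp].
  by move=> x Dx; rewrite funenegE max_oppe_addr_le_abs ?f_ge0.
rewrite integralE -/h hposE fE rE; move: hneg_fin.
have : 0 <= \int[mu]_(x in D) h^\- x by apply: integral_ge0 => x _; exact: funeneg_ge0.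
by case: (\int[mu]_(x in D) h^\- x).
Qed.

Lemma ge0_integral_lim_le (u : nat -> T -> \bar R) (l : T -> \bar R) (M : \bar R) :
  (forall N, measurable_fun D (u N)) -> (forall N x, D x -> 0 <= u N x) ->
  (forall x, D x -> u ^~ x @ \oo --> l x) ->
  (forall N, \int[mu]_(x in D) u N x <= M) ->
  \int[mu]_(x in D) l x <= M.
Proof.
move=> mu_ u0 ul uM.
rewrite (eq_integral (fun x => limn_einf (u ^~ x))); last first.
  by move=> x /[!inE] Dx; rewrite (cvg_limn_einf_sup (ul x Dx)).1.
apply: le_trans (fatou mu mD mu_ u0) _.
rewrite limn_einf_lim; apply: lime_le; first exact: is_cvg_einfs.
near=> N; apply: le_trans _ (uM N); apply: ereal_inf_lbound.
by exists N => /=.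
Unshelve. all: by end_near.
Qed.

Variables (w Z : T -> R).
Hypotheses (w_ge0 : forall x, D x -> (0 <= w x)%R)
  (w_int : mu.-integrable D (EFin \o w))
  (Zw_int : mu.-integrable D (EFin \o (fun x => Z x * w x)%R)).

Lemma integrable_affine_weighted (g e : R) :
  mu.-integrable D (EFin \o (fun x => (g * Z x + e) * w x)%R).
Proof.
have : mu.-integrable D (fun x => g%:E * (Z x * w x)%:E + e%:E * (w x)%:E).
  by apply: integrableD => //; exact: integrableZl.
by apply: eq_integrable => // x _ /=; rewrite -!EFinM -EFinD mulrDl mulrA.
Qed.

Lemma integrable_ramp_weighted (g e : R) :
  mu.-integrable D (EFin \o (fun x => ramp g e (Z x) * w x)%R).
Proof.
apply: le_integrable (integrable_affine_weighted g e) => //.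
  apply/measurable_EFinP.
  have : measurable_fun D (fun x => Num.max (g * (Z x * w x) + e * w x) 0)%R.
    apply: measurable_maxr => //; apply: measurable_funD; apply: measurable_funM => //.
      by apply/measurable_EFinP; exact: measurable_int Zw_int.
    by apply/measurable_EFinP; exact: measurable_int w_int.
  apply: eq_measurable_fun => x /[!inE] Dx.
  by rewrite /ramp maxr_pMl ?w_ge0 // mul0r mulrDl mulrA.
move=> x Dx /=; rewrite lee_fin !normrM ler_wpM2r // /ramp.
by case: (leP 0%R (g * Z x + e)%R) => // _; rewrite normr0.
Qed.

End WeightedIntegrals.

Section ConvexGap.
Local Open Scope ereal_scope.
Variables (R : realType) (phi : R -> R) (a b : R) (w Z : R -> R).
Hypotheses (phi_convex : convex_fun phi)
  (w_ge0 : forall x, `[a, b]%classic x -> (0 <= w x)%R)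
  (w_int : lebesgue_measure.-integrable `[a, b] (EFin \o w))
  (Zw_int : lebesgue_measure.-integrable `[a, b] (EFin \o (fun x => Z x * w x)%R))
  (approx_int : forall N, lebesgue_measure.-integrable `[a, b]
     (EFin \o (fun x => (convex_approx phi N (Z x) - tangent phi 0 (Z x)) * w x)%R)).

Lemma measurable_convex_gap : measurable_fun `[a, b]
  (fun x => ((phi (Z x) - tangent phi 0 (Z x)) * w x)%:E).
Proof.
apply: (emeasurable_fun_cvg
  (fun N x => ((convex_approx phi N (Z x) - tangent phi 0 (Z x)) * w x)%:E)).
  by move=> N; exact: measurable_int (approx_int N).
by move=> x _; exact: convex_approx_gap_cvg.
Qed.

Lemma Edens_tangent_split : Edens a b w (phi \o Z) =
  \int[lebesgue_measure]_(x in `[a, b]) ((phi (Z x) - tangent phi 0 (Z x)) * w x)%:E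
  + Edens a b w (tangent phi 0 \o Z).
Proof.
rewrite /Edens -integralD_ge0_integrable //.
- by apply: eq_integral => x _ /=; rewrite -EFinD mulrBl subrK.
- exact: measurable_convex_gap.
- by move=> x Dx; rewrite lee_fin mulr_ge0 ?w_ge0 // subr_ge0 tangent_le.
apply: eq_integrable (integrable_affine_weighted _ w_int Zw_int
  (right_deriv phi 0) (phi 0)) => // x _ /=.
by rewrite /tangent subr0 addrC.
Qed.

End ConvexGap.

Section ConvexOrderByRamps.
Local Open Scope ereal_scope.
Variables (R : realType) (a b c d : R) (w Z v W : R -> R).
Hypotheses (w_ge0 : forall x, `[a, b]%classic x -> (0 <= w x)%R)
  (w_int : lebesgue_measure.-integrable `[a, b] (EFin \o w))
  (Zw_int : lebesgue_measure.-integrable `[a, b] (EFin \o (fun x => Z x * w x)%R)).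
Hypotheses (v_ge0 : forall y, `[c, d]%classic y -> (0 <= v y)%R)
  (v_int : lebesgue_measure.-integrable `[c, d] (EFin \o v))
  (Wv_int : lebesgue_measure.-integrable `[c, d] (EFin \o (fun y => W y * v y)%R)).
Hypothesis ramp_le : forall g e : R,
  Edens c d v (ramp g e \o W) <= Edens a b w (ramp g e \o Z).
Hypothesis affine_eq : forall g e : R,
  Edens c d v ((fun r => g * r + e)%R \o W) = Edens a b w ((fun r => g * r + e)%R \o Z).

Record dominated_test (rho : R -> R) : Prop := DominatedTest {
  dominated_integrable_Z :
    lebesgue_measure.-integrable `[a, b] (EFin \o (fun x => rho (Z x) * w x)%R);
  dominated_integrable_W :
    lebesgue_measure.-integrable `[c, d] (EFin \o (fun y => rho (W y) * v y)%R);
  dominated_Edens_le : Edens c d v (rho \o W) <= Edens a b w (rho \o Z) }.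

Lemma dominated_affine (g e : R) : dominated_test (fun r => g * r + e)%R.
Proof.
by split; [exact: integrable_affine_weighted | exact: integrable_affine_weighted
          | rewrite affine_eq].
Qed.

Lemma dominated_ramp (g e : R) : dominated_test (ramp g e).
Proof.
by split; [exact: integrable_ramp_weighted | exact: integrable_ramp_weighted
          | exact: ramp_le].
Qed.

Lemma dominatedD (rho1 rho2 : R -> R) : dominated_test rho1 -> dominated_test rho2 ->
  dominated_test (fun r => rho1 r + rho2 r)%R.
Proof.
move=> [iZ1 iW1 le1] [iZ2 iW2 le2].
have EdensD (s t : R) (u U : R -> R) :
    lebesgue_measure.-integrable `[s, t] (EFin \o (fun x => rho1 (U x) * u x)%R) ->
    lebesgue_measure.-integrable `[s, t] (EFin \o (fun x => rho2 (U x) * u x)%R) ->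
    Edens s t u ((fun r => rho1 r + rho2 r)%R \o U) =
    Edens s t u (rho1 \o U) + Edens s t u (rho2 \o U).
  by move=> i1 i2; rewrite /Edens -integralD //; apply: eq_integral => x _ /=;
    rewrite mulrDl EFinD.
split; last by rewrite !EdensD //; exact: leeD.
- by apply: eq_integrable (integrableD _ iZ1 iZ2) => //= x _; rewrite -EFinD mulrDl.
- by apply: eq_integrable (integrableD _ iW1 iW2) => //= y _; rewrite -EFinD mulrDl.
Qed.

Lemma dominated_tangent_envelope (phi : R -> R) (xs : nat -> R) (m : nat) :
  dominated_test (tangent_envelope phi xs m).
Proof.
elim: m => [|m IH].
  have -> : tangent_envelope phi xs 0 = (fun r => right_deriv phi (xs 0%N) * r +
      (phi (xs 0%N) - right_deriv phi (xs 0%N) * xs 0%N))%R.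
    by apply/funext => r; rewrite /tangent_envelope big_ord0 /tangent; ring.
  exact: dominated_affine.
pose g := (right_deriv phi (xs m.+1) - right_deriv phi (xs m))%R.
pose e := (tangent phi (xs m.+1) 0 - tangent phi (xs m) 0)%R.
have -> : tangent_envelope phi xs m.+1 =
    (fun r => tangent_envelope phi xs m r + ramp g e r)%R.
  apply/funext => r; rewrite tangent_envelopeS /ramp /g /e /tangent.
  by congr (_ + Num.max _ _)%R; ring.
exact: dominatedD IH (dominated_ramp g e).
Qed.

Lemma cx_ge_of_ramps : cx_ge a b w Z c d v W.
Proof.
move=> phi phi_convex.
pose T0 := tangent phi 0.
have T0E : T0 = (fun r => right_deriv phi 0 * r + phi 0)%R.
  by apply/funext => r; rewrite /T0 /tangent subr0 addrC.
(* Subtracting a tangent makes the approximants nonnegative, as Fatou's lemma needs. *)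
have gap_dom N : dominated_test (fun r => convex_approx phi N r - T0 r)%R.
  have -> : (fun r => convex_approx phi N r - T0 r)%R = (fun r =>
      convex_approx phi N r + (- right_deriv phi 0 * r + - phi 0))%R.
    by apply/funext => r; rewrite T0E; ring.
  exact: dominatedD (dominated_tangent_envelope _ _ _) (dominated_affine _ _).
have gapZ_int N := dominated_integrable_Z (gap_dom N).
have gapW_int N := dominated_integrable_W (gap_dom N).
rewrite (Edens_tangent_split phi_convex v_ge0 v_int Wv_int gapW_int).
rewrite (Edens_tangent_split phi_convex w_ge0 w_int Zw_int gapZ_int) -/T0.
have -> : Edens c d v (T0 \o W) = Edens a b w (T0 \o Z) by rewrite T0E affine_eq.
apply: leeD2r; apply: (@ge0_integral_lim_le _ _ _ lebesgue_measure _ _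
  (fun N y => ((convex_approx phi N (W y) - T0 (W y)) * v y)%:E)) => //.
- by move=> N; exact: measurable_int (gapW_int N).
- move=> N y Dy; rewrite lee_fin mulr_ge0 ?v_ge0 // subr_ge0.
  exact: tangent0_le_convex_approx.
- by move=> y _; exact: convex_approx_gap_cvg.
move=> N; apply: le_trans (dominated_Edens_le (gap_dom N)) _; apply: ge0_le_integral => //.
- by move=> x Dx; rewrite lee_fin mulr_ge0 ?w_ge0 // subr_ge0 tangent0_le_convex_approx.
- exact: measurable_int (gapZ_int N).
- exact: (measurable_convex_gap phi_convex gapZ_int).
by move=> x Dx; rewrite lee_fin ler_wpM2r ?w_ge0 // lerD2r convex_approx_le.
Qed.

End ConvexOrderByRamps.

Section MixtureCoefficients.
Variables (R : realType) (n : nat).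

Definition affine_coef (g e : R) (c : 'I_n -> R) (j : 'I_n.+1) : R :=
  if unlift ord0 j is Some i then g * c i else e.

Definition posterior_coef (q : 'I_n -> R) (g e : R) (c : 'I_n -> R) (j : 'I_n.+1) : R :=
  full_prior q j * (if unlift ord0 j is Some i then g * c i + e else e).

Lemma full_prior_lift (q : 'I_n -> R) i : full_prior q (lift ord0 i) = q i.
Proof. by rewrite /full_prior liftK. Qed.

Lemma full_prior_ge0 (q : 'I_n -> R) : hat_simplex q -> forall j, 0 <= full_prior q j.
Proof.
move=> [q01 sq1] j; rewrite /full_prior; case: unlift => [i|].
  by case/andP: (q01 i).
by rewrite subr_ge0.
Qed.

Lemma lratio_affine_coef (h : 'I_n.+1 -> R -> R) g e c x : 0 < h ord0 x ->
  (g * \sum_(i < n) c i * lratio h x i + e) * h ord0 x =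
  \sum_(j < n.+1) affine_coef g e c j * h j x.
Proof.
move=> h0_gt0; rewrite big_ord_recl /affine_coef unlift_none.
under [in RHS]eq_bigr do rewrite liftK -mulrA.
rewrite -mulr_sumr mulrDl addrC -mulrA mulr_suml; congr (_ + g * _).
by apply: eq_bigr => i _; rewrite /lratio -mulrA divfK ?lt0r_neq0.
Qed.

Lemma posterior_coef_spec (h : 'I_n.+1 -> R -> R) (q : 'I_n -> R) g e c x :
  (forall j, 0 <= full_prior q j) -> (forall j, 0 <= h j x) ->
  (g * \sum_(i < n) c i * posterior h q x i + e) * uncond h q x =
  \sum_(j < n.+1) posterior_coef q g e c j * h j x.
Proof.
move=> fp_ge0 h_ge0; set u := uncond h q x.
set S := \sum_(i < n) c i * (q i * h (lift ord0 i) x).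
have postE : \sum_(i < n) c i * posterior h q x i = S / u.
  by rewrite mulr_suml; apply: eq_bigr => i _; rewrite /posterior -/u !mulrA.
have coefE : \sum_(j < n.+1) posterior_coef q g e c j * h j x = g * S + e * u.
  rewrite /u /uncond /S !big_ord_recl /posterior_coef unlift_none.
  under eq_bigr do rewrite liftK full_prior_lift.
  under [X in _ = _ + e * (_ + X)]eq_bigr do rewrite full_prior_lift.
  rewrite mulrDr !mulr_sumr addrCA -big_split /=; congr (_ + _); first ring.
  by apply: eq_bigr => i _; ring.
have [u0|u_neq0] := eqVneq u 0; last by rewrite postE coefE; field.
have S0 : S = 0.
  have terms0 := psumr_eq0P (fun j _ => mulr_ge0 (fp_ge0 j) (h_ge0 j)) u0.
  by apply: big1 => i _; rewrite -(full_prior_lift q) terms0 ?mulr0.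
by rewrite coefE u0 S0 !(mulr0, addr0).
Qed.

Lemma affine_coef_surj (al : 'I_n.+1 -> R) : exists g e c, affine_coef g e c = al.
Proof.
exists 1, (al ord0), (fun i => al (lift ord0 i)).
by apply/funext => j; rewrite /affine_coef; case: unliftP => [i ->|->]; rewrite ?mul1r.
Qed.

Definition uniform_prior : 'I_n -> R := fun=> n.+1%:R^-1.

Lemma uniform_prior_weight : 1 - \sum_(i < n) uniform_prior i = n.+1%:R^-1.
Proof.
rewrite sumr_const card_ord /uniform_prior -mulr_natl.
by field; rewrite addrC natr1 pnatr_eq0.
Qed.

Lemma hat_simplex_uniform : hat_simplex uniform_prior.
Proof.
have k_gt0 : 0 < n.+1%:R^-1 :> R by rewrite invr_gt0 ltr0Sn.
split; first by move=> i; rewrite ltW //= invf_le1 ?ltr0Sn // ler1n.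
by rewrite -subr_ge0 uniform_prior_weight ltW.
Qed.

Lemma posterior_coef_uniform_surj (al : 'I_n.+1 -> R) :
  exists g e c, posterior_coef uniform_prior g e c = al.
Proof.
have n1_neq0 : n.+1%:R != 0 :> R by rewrite pnatr_eq0.
exists 1, (al ord0 * n.+1%:R), (fun i => (al (lift ord0 i) - al ord0) * n.+1%:R).
apply/funext => j; rewrite /posterior_coef; case: unliftP => [i ->|->].
  by rewrite full_prior_lift mul1r -mulrDl subrK /uniform_prior mulrC mulfK.
by rewrite /full_prior unlift_none uniform_prior_weight mulrC mulfK.
Qed.

End MixtureCoefficients.

Section MixtureSide.
Local Open Scope ereal_scope.
Variables (R : realType) (n : nat) (a b : R) (f : 'I_n.+1 -> R -> R).
Hypothesis f_exp : is_experiment a b f.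

Lemma experiment_ge0 j x : `[a, b]%classic x -> (0 <= f j x)%R.
Proof. by move=> Dx; have [_ [f_ge0 _]] := f_exp j; apply: f_ge0; rewrite inE. Qed.

Lemma experiment_integrable j : lebesgue_measure.-integrable `[a, b] (EFin \o f j).
Proof.
have [mf [_ f1]] := f_exp j; apply/integrableP; split; first exact/measurable_EFinP.
suff -> : \int[lebesgue_measure]_(x in `[a, b]) `|(EFin \o f j) x| = 1 by exact: ltry.
by rewrite -f1; apply: eq_integral => x /[!inE] Dx; rewrite /= ger0_norm ?experiment_ge0.
Qed.

Lemma integrable_mixture (al : 'I_n.+1 -> R) : lebesgue_measure.-integrable `[a, b]
  (EFin \o (fun x => \sum_(j < n.+1) al j * f j x)%R).
Proof.
have : lebesgue_measure.-integrable `[a, b]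
    (fun x => \sum_(j < n.+1) (al j)%:E * (f j x)%:E).
  apply: integrable_sum => // j _.
  by apply: integrableZl => //; exact: experiment_integrable.
apply: eq_integrable => // x _.
by rewrite /= -sumEFin; apply: eq_bigr => j _; rewrite EFinM.
Qed.

Lemma integral_mixture (al : 'I_n.+1 -> R) :
  \int[lebesgue_measure]_(x in `[a, b]) (\sum_(j < n.+1) al j * f j x)%:E =
  (\sum_(j < n.+1) al j)%:E.
Proof.
transitivity (\int[lebesgue_measure]_(x in `[a, b])
    \sum_(j < n.+1) (al j)%:E * (f j x)%:E).
  by apply: eq_integral => x _; rewrite -sumEFin; apply: eq_bigr => j _; rewrite EFinM.
rewrite integral_sum //; last first.
  by move=> j; apply: integrableZl => //; exact: experiment_integrable.
rewrite -sumEFin; apply: eq_bigr => j _; have [_ [_ f1]] := f_exp j.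
by rewrite integralZl ?f1 ?mule1 //; exact: experiment_integrable.
Qed.

Lemma uncond_ge0 q : hat_simplex q -> forall x, `[a, b]%classic x -> (0 <= uncond f q x)%R.
Proof.
move=> q_simplex x Dx; apply: sumr_ge0 => j _.
by rewrite mulr_ge0 ?full_prior_ge0 ?experiment_ge0.
Qed.

Lemma lratio_mixture_spec : (forall x, x \in `[a, b] -> (0 < f ord0 x)%R) ->
  forall s e bv x, `[a, b]%classic x ->
  ((s * \sum_(i < n) bv i * lratio f x i + e) * f ord0 x =
   \sum_(j < n.+1) affine_coef s e bv j * f j x)%R.
Proof. by move=> f0_gt0 s e bv x Dx; apply: lratio_affine_coef; exact: f0_gt0. Qed.

Lemma posterior_mixture_spec q : hat_simplex q ->
  forall s e bv x, `[a, b]%classic x ->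
  ((s * \sum_(i < n) bv i * posterior f q x i + e) * uncond f q x =
   \sum_(j < n.+1) posterior_coef q s e bv j * f j x)%R.
Proof.
move=> q_simplex s e bv x Dx; apply: posterior_coef_spec; first exact: full_prior_ge0.
by move=> j; exact: experiment_ge0.
Qed.

Definition mixture_pos_integral (al : 'I_n.+1 -> R) : \bar R :=
  \int[lebesgue_measure]_(x in `[a, b]) (Num.max (\sum_(j < n.+1) al j * f j x) 0)%:E.

Variables (w : R -> R) (Z : R -> 'I_n -> R) (K : R -> R -> ('I_n -> R) -> 'I_n.+1 -> R).
Hypotheses (w_ge0 : forall x, `[a, b]%classic x -> (0 <= w x)%R)
  (K_spec : forall g e c x, `[a, b]%classic x ->
     ((g * \sum_(i < n) c i * Z x i + e) * w x = \sum_(j < n.+1) K g e c j * f j x)%R).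

Lemma Edens_ramp_mixture g e c :
  Edens a b w (ramp g e \o (fun x => \sum_(i < n) c i * Z x i)%R) =
  mixture_pos_integral (K g e c).
Proof.
apply: eq_integral => x /[!inE] Dx; congr EFin.
by rewrite /= /ramp maxr_pMl ?w_ge0 // mul0r K_spec.
Qed.

Lemma Edens_affine_mixture g e c :
  Edens a b w ((fun r => g * r + e)%R \o (fun x => \sum_(i < n) c i * Z x i)%R) =
  (\sum_(j < n.+1) K g e c j)%:E.
Proof.
rewrite -integral_mixture; apply: eq_integral => x /[!inE] Dx.
by rewrite /= K_spec.
Qed.

Lemma integrable_linear_weighted (g e : R) c : lebesgue_measure.-integrable `[a, b]
  (EFin \o (fun x => (g * \sum_(i < n) c i * Z x i + e) * w x)%R).
Proof.
by apply: eq_integrable (integrable_mixture (K g e c)) => // x /[!inE] Dx /=;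
  rewrite K_spec.
Qed.

End MixtureSide.

Section ComparisonByMixtures.
Local Open Scope ereal_scope.
Variables (R : realType) (n : nat) (a b c d : R) (f g : 'I_n.+1 -> R -> R).
Hypotheses (f_exp : is_experiment a b f) (g_exp : is_experiment c d g).
Variables (wf wg : R -> R) (Zf Zg : R -> 'I_n -> R).
Variable K : R -> R -> ('I_n -> R) -> 'I_n.+1 -> R.
Hypotheses (wf_ge0 : forall x, `[a, b]%classic x -> (0 <= wf x)%R)
  (Kf_spec : forall s e bv x, `[a, b]%classic x ->
     ((s * \sum_(i < n) bv i * Zf x i + e) * wf x = \sum_(j < n.+1) K s e bv j * f j x)%R).
Hypotheses (wg_ge0 : forall y, `[c, d]%classic y -> (0 <= wg y)%R)
  (Kg_spec : forall s e bv y, `[c, d]%classic y ->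
     ((s * \sum_(i < n) bv i * Zg y i + e) * wg y = \sum_(j < n.+1) K s e bv j * g j y)%R).

Definition pos_mixture_le :=
  forall al, mixture_pos_integral c d g al <= mixture_pos_integral a b f al.

Lemma lcx_ge_of_pos_mixture_le : pos_mixture_le -> lcx_ge a b wf Zf c d wg Zg.
Proof.
move=> le_pos bv.
have int_f s e := integrable_linear_weighted f_exp Kf_spec s e bv.
have int_g s e := integrable_linear_weighted g_exp Kg_spec s e bv.
apply: cx_ge_of_ramps => //.
- by apply: eq_integrable (int_f 0%R 1%R) => // x _ /=; rewrite mul0r add0r mul1r.
- by apply: eq_integrable (int_f 1%R 0%R) => // x _ /=; rewrite mul1r addr0.
- by apply: eq_integrable (int_g 0%R 1%R) => // y _ /=; rewrite mul0r add0r mul1r.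
- by apply: eq_integrable (int_g 1%R 0%R) => // y _ /=; rewrite mul1r addr0.
- move=> s e; rewrite (Edens_ramp_mixture wf_ge0 Kf_spec).
  by rewrite (Edens_ramp_mixture wg_ge0 Kg_spec); exact: le_pos.
- move=> s e.
  by rewrite (Edens_affine_mixture f_exp Kf_spec) (Edens_affine_mixture g_exp Kg_spec).
Qed.

Lemma pos_mixture_le_of_lcx_ge : (forall al, exists s e bv, K s e bv = al) ->
  lcx_ge a b wf Zf c d wg Zg -> pos_mixture_le.
Proof.
move=> K_surj lcx al; have [s [e [bv <-]]] := K_surj al.
have := lcx bv (ramp s e) (ramp_convex s e).
by rewrite (Edens_ramp_mixture wf_ge0 Kf_spec) (Edens_ramp_mixture wg_ge0 Kg_spec).
Qed.

End ComparisonByMixtures.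

Theorem proposition1 (R : realType) (n : nat) (a b c d : R)
    (f g : 'I_n.+1 -> R -> R) :
  is_experiment a b f -> is_experiment c d g ->
  (forall x, x \in `[a, b] -> 0 < f ord0 x) ->
  (forall y, y \in `[c, d] -> 0 < g ord0 y) ->
  (LB_ge a b f c d g <->
   lcx_ge a b (f ord0) (lratio f) c d (g ord0) (lratio g)).
Proof.
move=> f_exp g_exp f0_gt0 g0_gt0.
have f0_ge0 := experiment_ge0 f_exp ord0; have g0_ge0 := experiment_ge0 g_exp ord0.
have lratio_f := lratio_mixture_spec f0_gt0; have lratio_g := lratio_mixture_spec g0_gt0.
split => [LB | lcx].
- apply: (lcx_ge_of_pos_mixture_le f_exp g_exp f0_ge0 lratio_f g0_ge0 lratio_g).
  have unif := @hat_simplex_uniform R n.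
  apply: (pos_mixture_le_of_lcx_ge (uncond_ge0 f_exp unif)
    (posterior_mixture_spec f_exp unif) (uncond_ge0 g_exp unif)
    (posterior_mixture_spec g_exp unif) (@posterior_coef_uniform_surj R n)).
  exact: LB.
- move=> q q_simplex.
  apply: (lcx_ge_of_pos_mixture_le f_exp g_exp (uncond_ge0 f_exp q_simplex)
    (posterior_mixture_spec f_exp q_simplex) (uncond_ge0 g_exp q_simplex)
    (posterior_mixture_spec g_exp q_simplex)).
  exact: (pos_mixture_le_of_lcx_ge f0_ge0 lratio_f g0_ge0 lratio_g (@affine_coef_surj R n)).
Qed.
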